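(* Let $\mathcal{C}$ be a $k$-uniform clutter on vertex set $\{1,\dots,n\}$, let $I(\mathcal{C})\subseteq\mathbb{K}[x_1,\dots,x_n]$ be its edge ideal, and let $s\geq 2$ be an integer. (i) If $\operatorname{Indmath}(\mathcal{C})=2$, then $\operatorname{reg}(I(\mathcal{C})^s)\geq ks+k-1$. (ii) If $\operatorname{Indmath}(\mathcal{C})\geq 3$, then $\operatorname{reg}(I(\mathcal{C})^s)\geq ks+2k-2$.
   Context: A clutter $\mathcal{C}$ on a finite vertex set is a set of subsets (edges) none containing another; $k$-uniform means every edge has $k$ elements. The edge ideal is $I(\mathcal{C})=(\prod_{i\in e}x_i: e\in E(\mathcal{C}))$. An induced matching is a set of pairwise disjoint edges $e_1,\dots,e_t$ such that they are the only edges contained in $\bigcup_i e_i$; $\operatorname{Indmath}(\mathcal{C})$ is the maximum size of an induced matching. The Castelnuovo–Mumford regularity is $\operatorname{reg}(I)=\max\{j:\beta_{i,i+j}(I)\neq0\text{ for some } i\}$, where $\beta_{i,j}$ are the $\mathbb{Z}$-graded Betti numbers of $I$ (with $\beta_{0,j}$ counting minimal generators of degree $j$). *)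

From HB Require Import structures.
From mathcomp Require Import all_boot all_order all_algebra.
Set Implicit Arguments. Unset Strict Implicit. Unset Printing Implicit Defensive.
Import GRing.Theory.

(* Vertices {1,...,n} are modelled by 'I_n; a clutter is a set of edges. *)
Definition clutter (n : nat) (C : {set {set 'I_n}}) : Prop :=
  forall e f, e \in C -> f \in C -> e \subset f -> e = f.

Definition uniform (n k : nat) (C : {set {set 'I_n}}) : Prop :=
  forall e, e \in C -> #|e| = k.

Definition induced_matching (n : nat) (C M : {set {set 'I_n}}) : bool :=
  [&& M \subset C,
      [forall e in M, forall f in M, (e != f) ==> [disjoint e & f]] &
      [forall e in C, (e \subset \bigcup_(f in M) f) ==> (e \in M)]].

Definition indmatch (n : nat) (C : {set {set 'I_n}}) : nat :=
  \max_(M : {set {set 'I_n}} | induced_matching C M) #|M|.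

(* Monomials x^a of K[x_1..x_n] are exponent vectors a : 'I_n -> nat.
   A monomial ideal is given by the (boolean) set of monomials it contains;
   as a K-vector space it is spanned by these monomials. *)
Definition monideal (n : nat) := ('I_n -> nat) -> bool.

(* Monomials of I(C)^s: x^a is divisible by a product of s edge monomials
   (edges counted with multiplicity m e). *)
Definition edge_ideal_pow (n : nat) (C : {set {set 'I_n}}) (s : nat)
  : monideal n :=
  fun a => [exists m : {ffun {set 'I_n} -> 'I_s.+1},
    [&& (\sum_(e : {set 'I_n}) (m e : nat) == s)%N,
        [forall e, (0 < m e)%N ==> (e \in C)] &
        [forall v, (\sum_(e : {set 'I_n} | v \in e) (m e : nat) <= a v)%N]]].

(* Koszul complex I (x) K(x_1..x_n) in multidegree b: homological degree i
   has K-basis  x^(b - 1_F) (x) e_F  with |F| = i, F \subset supp b and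
   x^(b - 1_F) \in I. *)
Definition kbasis (n : nat) (I : monideal n) (b : 'I_n -> nat) (i : nat)
  (F : {set 'I_n}) : bool :=
  [&& #|F| == i, [forall v in F, 0 < b v]%N & I (fun v => b v - (v \in F))%N].

Definition kdim (n : nat) (I : monideal n) (b : 'I_n -> nat) (i : nat) : nat :=
  #|[set F | kbasis I b i F]|.

(* Matrix of the Koszul differential d_i : C_i -> C_{i-1} (multidegree b),
   x^c (x) e_F |-> sum_{v in F} (-1)^{#{u in F | u < v}} x^(c + e_v) (x) e_(F\v),
   rows indexed by F, columns by G (padded with zeros outside the bases). *)
Definition kdiff (K : fieldType) (n : nat) (I : monideal n) (b : 'I_n -> nat)
  (i : nat) : 'M[K]_(#|{set 'I_n}|, #|{set 'I_n}|) :=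
  (\matrix_(r, c)
    let F : {set 'I_n} := enum_val r in let G : {set 'I_n} := enum_val c in
    if kbasis I b i F && kbasis I b i.-1 G && (0 < i)%N then
      \sum_(v in F | G == F :\ v) (-1) ^+ #|[set u in F | (u < v)%N]|
    else 0)%R.

(* Multigraded Betti number beta_{i,b}(I) = dim_K Tor_i(I, K)_b, computed as
   the homology in degree i of the Koszul complex I (x) K(x). *)
Definition betti (K : fieldType) (n : nat) (I : monideal n) (i : nat)
  (b : 'I_n -> nat) : nat :=
  (kdim I b i - \rank (kdiff K I b i) - \rank (kdiff K I b i.+1))%N.

Definition total_degree (n : nat) (b : 'I_n -> nat) : nat := (\sum_v b v)%N.

(* Z-graded Betti number beta_{i,j}(I) = sum_{|b| = j} beta_{i,b}(I) is
   nonzero iff some multigraded one in total degree j is nonzero. *)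
Definition betti_nonzero (K : fieldType) (n : nat) (I : monideal n)
  (i j : nat) : Prop :=
  exists b : 'I_n -> nat, total_degree b = j /\ betti K I i b <> 0%N.

(* reg(I) = max{ j : beta_{i,i+j}(I) <> 0 for some i }; as this maximum is over
   a finite nonempty set, reg(I) >= r iff such a j >= r exists. *)
Definition reg_ge (K : fieldType) (n : nat) (I : monideal n) (r : nat) : Prop :=
  exists i j : nat, (r <= j)%N /\ betti_nonzero K I i (i + j).

(* The Betti numbers are computed by the Koszul complex I (x) K(x) in a
   fixed multidegree b, so it suffices to exhibit, in a suitable degree b,
   an i-cycle that is not a boundary.  We use the boundary of a set F0
   whose faces are basis elements (a cycle since the boundary squares to
   zero), and an i-cocycle f with (cobd f) F0 <> 0, which shows that the
   cycle is not a boundary (betti_neq0_of_cocycle).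

   The multidegrees are supported on an induced matching M of the clutter:
   b = sum_(e in M) c_e 1_e.  On such degrees, membership in I(C)^s reduces
   to a count over the edges of M (edge_pow_matchingE).  For part (i) we
   take two edges with weights 1, s and a 1-cocycle counting points in the
   first edge; for part (ii) three edges with weights 1, 1, s and the cup
   product of the analogous cochains for the first two edges.  Computing the
   total degree of b gives the two bounds; part (i) in fact holds as soon
   as indmatch C >= 2. *)

From HB Require Import structures.
From mathcomp Require Import all_boot all_order all_algebra zify.
Set Implicit Arguments. Unset Strict Implicit. Unset Printing Implicit Defensive.
Import GRing.Theory.

(* All matrices are square of size N and the relevant
   chain space is the coordinate subspace spanned by the indices in w. *)
Section HomologyRank.
Local Open Scope ring_scope.
Variables (K : fieldType) (N : nat) (w : pred 'I_N).

Definition coord_proj : 'M[K]_N := \sum_(c | w c) delta_mx c c.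

Lemma coord_projE r c : coord_proj r c = ((r == c) && w r)%:R.
Proof.
rewrite /coord_proj summxE; case: (boolP (w r)) => wr.
  rewrite (bigD1 r) //= mxE eqxx big1 ?addr0 => [|i /andP[_ ir]].
    by rewrite andbT eq_sym.
  by rewrite mxE; case: eqP => // ri; rewrite ri eqxx in ir.
rewrite andbF big1 // => i wi; rewrite mxE.
by case: eqP => // ri; rewrite ri wi in wr.
Qed.

Lemma mxrank_coord_proj : (\rank coord_proj <= #|w|)%N.
Proof.
rewrite /coord_proj -sum1_card.
apply: (big_ind2 (fun (M : 'M[K]_N) m => \rank M <= m)%N).
- by rewrite mxrank0.
- by move=> M1 m1 M2 m2 h1 h2; apply: leq_trans (mxrank_add M1 M2) (leq_add h1 h2).
- by move=> c _; rewrite mxrank_delta.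
Qed.

(* If B A = 0 (a complex C_{i+1} -B-> C_i -A-> C_{i-1} living on w), and
   z is a cycle (z A = 0) pairing nontrivially with a cocycle y (B y = 0),
   then z is not a boundary, so rank A + rank B < dim C_i. *)
Lemma mxrank_add_lt_of_cycle (A B : 'M[K]_N) (z : 'rV[K]_N) (y : 'cV[K]_N) :
  B *m A = 0 -> (forall r c, ~~ w r -> A r c = 0) ->
  (forall r c, ~~ w c -> B r c = 0) -> (forall c, ~~ w c -> z 0 c = 0) ->
  z *m A = 0 -> B *m y = 0 -> z *m y != 0 ->
  (\rank A + \rank B < #|w|)%N.
Proof.
move=> BA Aw Bw zw zA By zy.
set P := coord_proj.
have PA : P *m A = A.
  apply/matrixP => r c; rewrite mxE (bigD1 r) //= coord_projE eqxx big1 ?addr0.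
    by case: (boolP (w r)) => wr; rewrite ?mul1r // mul0r Aw.
  by move=> i /negbTE ir; rewrite coord_projE eq_sym ir mul0r.
have XP m (X : 'M[K]_(m, N)) : (forall r c, ~~ w c -> X r c = 0) -> X *m P = X.
  move=> Xw; apply/matrixP => r c; rewrite mxE (bigD1 c) //= coord_projE eqxx.
  rewrite big1 ?addr0 => [|i /negbTE ir]; last by rewrite coord_projE ir mulr0.
  by case: (boolP (w c)) => wc; rewrite ?mulr1 // mulr0 Xw.
(* B and z together span a subspace of ker A inside the image of P. *)
pose X := col_mx B z.
have XPA : (X <= P :&: kermx A)%MS.
  rewrite sub_capmx sub_kermx mul_col_mx BA zA col_mx0 eqxx andbT.
  rewrite -(XP _ X) ?submxMl // => r c wc.
  by rewrite mxE; case: (split r) => r'; rewrite ?Bw // ord1 zw.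
have zB : ~~ (z <= B)%MS.
  by apply/negP => /submxP[D zD]; move: zy; rewrite zD -mulmxA By mulmx0 eqxx.
have rBX : (\rank B < \rank X)%N.
  have : (B < X)%MS.
    by rewrite ltmxE -addsmxE addsmxSl /= col_mx_sub negb_and zB orbT.
  by rewrite ltmxErank => /andP[].
have := mxrank_mul_ker P A; rewrite PA.
have := mxrankS XPA; have := mxrank_coord_proj; rewrite -/P.
lia.
Qed.

End HomologyRank.

(* A cochain is a function
   f on subsets; its coboundary is (cobd f) F = sum_(v in F) sgn F v f(F\v),
   which is the transpose of the Koszul differential. *)
Section Coboundary.
Local Open Scope ring_scope.
Variables (K : fieldType) (n : nat).
Implicit Types (F G H A B : {set 'I_n}) (f g : {set 'I_n} -> K).

Definition ksign F (v : 'I_n) : K := (-1) ^+ #|[set u in F | (u < v)%N]|.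

Definition cobd f F : K := \sum_(v in F) ksign F v * f (F :\ v).

Lemma ksign_neq0 F v : ksign F v != 0.
Proof. by rewrite signr_eq0. Qed.

Lemma eq_cobd f g F :
  (forall v, v \in F -> f (F :\ v) = g (F :\ v)) -> cobd f F = cobd g F.
Proof. by move=> fg; apply: eq_bigr => v vF; rewrite fg. Qed.

Lemma cobd_zero f F : (forall v, v \in F -> f (F :\ v) = 0) -> cobd f F = 0.
Proof. by move=> f0; apply: big1 => v vF; rewrite f0 ?mulr0. Qed.

(* Coboundaries of indicator functions are the matrix entries of the
   Koszul differential, and expanding f in indicators commutes with cobd. *)
Lemma cobd_indicator f F : \sum_G cobd (fun H => (G == H)%:R) F * f G = cobd f F.
Proof.
rewrite /cobd; under eq_bigr => G _ do rewrite mulr_suml.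
rewrite exchange_big /=; apply: eq_bigr => v vF.
rewrite (bigD1 (F :\ v)) //= eqxx mulr1 big1 ?addr0 // => G /negbTE ->.
by rewrite mulr0 mul0r.
Qed.

Lemma ksign_swap F v w : v \in F -> w \in F -> (v < w)%N ->
  ksign F v * ksign (F :\ v) w = - (ksign F w * ksign (F :\ w) v).
Proof.
move=> vF wF vw; rewrite /ksign.
have -> : [set u in F :\ v | (u < w)%N] = [set u in F | (u < w)%N] :\ v.
  by apply/setP => u; rewrite !inE andbA.
have -> : [set u in F :\ w | (u < v)%N] = [set u in F | (u < v)%N].
  apply/setP => u; rewrite !inE; case: eqP => //= ->.
  by rewrite ltnNge (ltnW vw) andbF.
rewrite (cardsD1 v [set u in F | (u < w)%N]) inE vF vw /= add1n exprS.
by rewrite mulN1r mulNr opprK mulrC.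
Qed.

Lemma cobdK f F : cobd (cobd f) F = 0.
Proof.
rewrite /cobd.
pose Y v w := ksign F v * ksign (F :\ v) w * f (F :\ v :\ w).
pose T (lt : 'I_n -> 'I_n -> bool) :=
  \sum_v \sum_w (if [&& v \in F, w \in F & lt v w] then Y v w else 0).
transitivity (T (fun v w => v < w)%N + T (fun v w => w < v)%N).
  rewrite -big_split big_mkcond /=; apply: eq_bigr => v _.
  case vF: (v \in F); last by rewrite big1 ?addr0.
  rewrite mulr_sumr -big_split big_mkcond /=; apply: eq_bigr => w _.
  rewrite !inE /Y mulrA.
  case: (ltngtP v w) => [vw|wv|/val_inj ->]; rewrite ?eqxx ?andbF ?addr0 ?add0r //.
  - by rewrite -val_eqE (gtn_eqF vw) andbT.
  - by rewrite -val_eqE (ltn_eqF wv) andbT.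
rewrite /T [X in _ + X]exchange_big -big_split big1 // => v _.
rewrite -big_split big1 // => w _ /=.
case vF: (v \in F); case wF: (w \in F); rewrite /= ?addr0 //.
case: (ltngtP v w) => vw; rewrite ?addr0 //.
rewrite /Y ksign_swap // -mulNr.
have -> : F :\ w :\ v = F :\ v :\ w by rewrite setDDl setUC -setDDl.
by rewrite !mulNr addNr.
Qed.

Lemma cobd_set1 f x : cobd f [set x] = f set0.
Proof.
rewrite /cobd big_set1 setDv /ksign.
have -> : [set u in [set x] | (u < x)%N] = set0.
  by apply/setP => u; rewrite !inE; case: eqP => // ->; rewrite ltnn.
by rewrite cards0 expr0 mul1r.
Qed.

Lemma cobd_set2 f x y : x != y ->
  cobd f [set x; y] = ksign [set x; y] x * f [set y] + ksign [set x; y] y * f [set x].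
Proof.
move=> xy; rewrite /cobd big_setU1 ?inE // big_set1.
have -> : [set x; y] :\ y = [set x] by rewrite setUC setU1K // inE eq_sym.
by rewrite setU1K // inE.
Qed.

Definition meetc A G : K := #|G :&: A|%:R.

Lemma meetc1 A x : meetc A [set x] = (x \in A)%:R.
Proof.
rewrite /meetc; case: (boolP (x \in A)) => xA.
  by rewrite (setIidPl _) ?cards1 // sub1set.
by rewrite disjoint_setI0 ?cards0 // disjoints1.
Qed.

Lemma meetc0 A G : [disjoint G & A] -> meetc A G = 0.
Proof. by rewrite -setI_eq0 /meetc => /eqP ->; rewrite cards0. Qed.

(* On a 2-set, a cochain that is 1 on both faces is a coboundary
   (of the constant 1), hence has zero coboundary. *)
Lemma cobd_pair_const1 f G :
  #|G| = 2 -> (forall v, v \in G -> f (G :\ v) = 1) -> cobd f G = 0.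
Proof.
move=> cG f1; rewrite -(cobdK (fun _ => 1) G); apply: eq_cobd => v vG.
rewrite f1 //; have /cards1P[x ->] : #|G :\ v| == 1%N.
  by move: cG; rewrite (cardsD1 v) vG add1n => -[->].
by rewrite cobd_set1.
Qed.

Lemma cobd_meetc_pair0 A G :
  #|G| = 2 -> (G \subset A) || [disjoint G & A] -> cobd (meetc A) G = 0.
Proof.
move=> cG /orP[GA|GA].
  apply: cobd_pair_const1 => // v vG.
  rewrite /meetc (setIidPl _); last by apply: subset_trans GA; apply: subD1set.
  by move: cG; rewrite (cardsD1 v) vG add1n => -[->].
apply: cobd_zero => v _; apply: meetc0.
exact: disjointWl (subD1set G v) GA.
Qed.

Lemma cobd_meetc_cross A x y : x \in A -> y \notin A ->
  cobd (meetc A) [set x; y] = ksign [set x; y] y.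
Proof.
move=> xA yA; have xy : x != y by apply: contraNneq yA => <-.
by rewrite cobd_set2 // !meetc1 xA (negbTE yA) mulr0 add0r mulr1.
Qed.

Lemma cup_meetc_pair A B G : [disjoint A & B] -> #|G| = 2 -> G \subset A :|: B ->
  cobd (meetc A) G * meetc B G = cobd (meetc A) G.
Proof.
move=> AB /eqP/cards2P[x [y [xy ->]]] GAB.
have inAB z : z \in [set x; y] -> (z \in A) || (z \in B).
  by move=> zG; move: (subsetP GAB z zG); rewrite inE.
have xAB := inAB x (setU11 _ _); have yAB := inAB y (setU1r _ (set11 _)).
have notB z : z \in A -> z \in B = false := fun zA => disjointFr AB zA.
case xA: (x \in A); case yA: (y \in A).
- rewrite cobd_meetc_pair0 ?mul0r ?cards2 ?xy //.
  by apply/orP; left; apply/subsetP => z; rewrite !inE => /orP[] /eqP ->.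
- have yB : y \in B by move: yAB; rewrite yA.
  rewrite (_ : meetc B _ = 1) ?mulr1 // /meetc (_ : _ :&: B = [set y]) ?cards1 //.
  apply/setP => z; rewrite !inE; case: (z =P y) => [->|_]; first by rewrite yB orbT.
  by rewrite orbF; apply/negP => /andP[/eqP -> ]; rewrite notB.
- have xB : x \in B by move: xAB; rewrite xA.
  rewrite (_ : meetc B _ = 1) ?mulr1 // /meetc (_ : _ :&: B = [set x]) ?cards1 //.
  apply/setP => z; rewrite !inE; case: (z =P x) => [->|_]; first by rewrite xB.
  by apply/negP => /andP[/eqP -> ]; rewrite notB.
- rewrite cobd_meetc_pair0 ?mul0r ?cards2 ?xy //.
  apply/orP; right; rewrite disjoint_subset; apply/subsetP => z.
  by rewrite !inE => /orP[] /eqP ->; rewrite ?xA ?yA.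
Qed.

End Coboundary.

Definition upclosed n (I : monideal n) :=
  forall a a' : 'I_n -> nat, I a -> (forall v, a v <= a' v)%N -> I a'.

Section KoszulHomology.
Local Open Scope ring_scope.
Variables (K : fieldType) (n : nat) (I : monideal n) (b : 'I_n -> nat).
Hypothesis upI : upclosed I.
Implicit Types (F H : {set 'I_n}).


Lemma kdiffE i r c : kdiff K I b i r c =
  if kbasis I b i (enum_val r) && kbasis I b i.-1 (enum_val c) && (0 < i)%N
  then cobd (fun H => (enum_val c == H)%:R) (enum_val r) else 0.
Proof.
rewrite /kdiff mxE; case: ifP => // _; rewrite /cobd big_mkcondr /=.
by apply: eq_bigr => v _; case: eqP; rewrite ?mulr1 ?mulr0.
Qed.

(* Faces of basis elements are basis elements, as I is closed under
   multiples. *)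
Lemma kbasis_face i F v : kbasis I b i.+1 F -> v \in F -> kbasis I b i (F :\ v).
Proof.
case/and3P => /eqP cF /forall_inP bF IF vF; apply/and3P; split.
- by move: cF; rewrite (cardsD1 v) vF add1n => -[->].
- by apply/forall_inP => u; rewrite inE => /andP[_ /bF].
- apply: (upI IF) => u; apply: leq_sub2l; rewrite inE.
  by case: (u \in F); rewrite ?andbT ?andbF ?leq_b1.
Qed.

Lemma sum_enum_set (g : {set 'I_n} -> K) :
  \sum_(k < #|{set 'I_n}|) g (enum_val k) = \sum_H g H.
Proof. by rewrite (big_enum_val g). Qed.

(* If all faces of F are basis elements, the boundary of F (the vector of
   coefficients cobd of indicators) is annihilated by d_i: each entry is a
   coboundary of a coboundary. *)
Lemma boundary_cycle i F (c : 'I_#|{set 'I_n}|) :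
  (forall v, v \in F -> kbasis I b i (F :\ v)) ->
  \sum_k cobd (fun H => (enum_val k == H)%:R) F * kdiff K I b i k c = 0.
Proof.
move=> hF.
transitivity (\sum_H cobd (fun H' => (H == H')%:R : K) F * kdiff K I b i (enum_rank H) c).
  by rewrite -sum_enum_set; apply: eq_bigr => k _; rewrite enum_valK.
rewrite cobd_indicator.
transitivity (cobd (fun H => if kbasis I b i.-1 (enum_val c) && (0 < i)%N then
            cobd (fun H' => (enum_val c == H')%:R : K) H else 0) F).
  by apply: eq_cobd => v vF; rewrite kdiffE enum_rankK hF.
by case: (_ && _); [apply: cobdK | apply: cobd_zero].
Qed.

Lemma kdiff_cochain i F (f : {set 'I_n} -> K) r : enum_val r = F ->
  (kdiff K I b i.+1 *m \col_k f (enum_val k)) r 0 =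
  if kbasis I b i.+1 F then cobd f F else 0.
Proof.
move=> rF; rewrite mxE.
case: (boolP (kbasis I b i.+1 F)) => hF; last first.
  by rewrite big1 // => k _; rewrite kdiffE rF (negbTE hF) mul0r.
transitivity (\sum_H cobd (fun H' => (H == H')%:R : K) F *
   (if kbasis I b i H then f H else 0)).
  rewrite -sum_enum_set; apply: eq_bigr => k _.
  by rewrite kdiffE rF hF /= mxE andbT; case: ifP; rewrite ?mulr0 ?mul0r.
by rewrite cobd_indicator; apply: eq_cobd => v vF; rewrite kbasis_face.
Qed.

Lemma card_kbasis_index i :
  #|[pred c : 'I_#|{set 'I_n}| | kbasis I b i (enum_val c)]| = kdim I b i.
Proof.
rewrite /kdim -!sum1_card.
transitivity (\sum_(x in predT | kbasis I b i x) 1%N).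
  by rewrite [RHS]big_enum_val_cond; apply: eq_bigl => c; rewrite !inE.
by apply: eq_bigl => F; rewrite !inE.
Qed.

Lemma betti_neq0_of_cocycle i (F0 : {set 'I_n}) (f : {set 'I_n} -> K) : (0 < i)%N ->
  (forall v, v \in F0 -> kbasis I b i (F0 :\ v)) ->
  (forall H, kbasis I b i.+1 H -> cobd f H = 0) -> cobd f F0 != 0 ->
  betti K I i b <> 0%N.
Proof.
move=> i0 hF0 cocycle hnz.
set A := kdiff K I b i; set B := kdiff K I b i.+1.
pose w := [pred c : 'I_#|{set 'I_n}| | kbasis I b i (enum_val c)].
pose z := \row_(c < #|{set 'I_n}|) cobd (fun H => (enum_val c == H)%:R : K) F0.
pose y := \col_(c < #|{set 'I_n}|) f (enum_val c).
have BA : B *m A = 0.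
  apply/matrixP => r c; rewrite !mxE.
  case: (boolP (kbasis I b i.+1 (enum_val r))) => hr; last first.
    by apply: big1 => k _; rewrite /B kdiffE (negbTE hr) mul0r.
  rewrite -[RHS](@boundary_cycle i (enum_val r) c) => [|v]; last exact: kbasis_face.
  apply: eq_bigr => k _; rewrite [B r k]kdiffE hr /=.
  case: (boolP (kbasis I b i (enum_val k))) => hk //=.
  by rewrite /A kdiffE (negbTE hk) !mulr0.
have Aw r c : ~~ w r -> A r c = 0 by rewrite inE /A kdiffE => /negbTE ->.
have Bw r c : ~~ w c -> B r c = 0 by rewrite inE /B kdiffE /= => /negbTE ->; rewrite andbF.
have zw c : ~~ w c -> z 0 c = 0.
  rewrite inE mxE => hc; apply: cobd_zero => v vF.
  by case: eqP => // e; move: hc; rewrite e hF0.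
have zA : z *m A = 0.
  apply/matrixP => r c; rewrite [RHS]mxE -(boundary_cycle c hF0) mxE.
  by apply: eq_bigr => k _; rewrite mxE.
have By : B *m y = 0.
  apply/matrixP => r c; rewrite ord1 [RHS]mxE /B /y (kdiff_cochain _ _ (erefl _)).
  by case: ifP => // /cocycle.
have zy : z *m y != 0.
  have zyE : (z *m y) 0 0 = cobd f F0.
    rewrite mxE -cobd_indicator -sum_enum_set.
    by apply: eq_bigr => k _; rewrite !mxE.
  by apply: contraNneq hnz => zy0; rewrite -zyE zy0 mxE.
have := mxrank_add_lt_of_cycle BA Aw Bw zw zA By zy.
rewrite card_kbasis_index /betti -/A -/B.
lia.
Qed.

End KoszulHomology.

Lemma sum_trim (T : finType) (P : pred T) (c : T -> nat) (s : nat) :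
  (s <= \sum_(x | P x) c x)%N ->
  exists m : T -> nat, [/\ forall x, (m x <= c x)%N, forall x, ~~ P x -> m x = 0%N
                         & (\sum_(x | P x) m x)%N = s].
Proof.
elim: s => [|s IH] hs.
  by exists (fun=> 0%N); split=> //; rewrite big1.
have [m [mc mP ms]] := IH (ltnW hs).
have [x /andP[Px mx]] : exists x, P x && (m x < c x)%N.
  apply/existsP; apply: contraTT hs; rewrite negb_exists => /forallP hm.
  rewrite -leqNgt -ms; apply: leq_sum => x Px.
  by move: (hm x); rewrite Px /= -leqNgt.
exists (fun y => m y + (y == x))%N; split.
- by move=> y; case: eqP => [->|_]; rewrite ?addn1 ?addn0.
- by move=> y Py; rewrite mP //; case: eqP => // eyx; rewrite eyx Px in Py.
- rewrite big_split /= ms (bigD1 x) //= eqxx big1 ?addn0 ?addn1 //.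
  by move=> y /andP[_ /negbTE ->].
Qed.

Section EdgeIdealPower.
Variables (n s : nat) (C : {set {set 'I_n}}).

Lemma edge_ideal_powP (a : 'I_n -> nat) :
  reflect (exists m : {set 'I_n} -> nat,
             [/\ (\sum_(e : {set 'I_n}) m e = s)%N, forall e, (0 < m e)%N -> e \in C
               & forall v, (\sum_(e : {set 'I_n} | v \in e) m e <= a v)%N])
          (edge_ideal_pow C s a).
Proof.
apply: (iffP existsP) => [[m /and3P[/eqP ms /forallP mC /forallP ma]]|[m [ms mC ma]]].
  by exists (fun e => nat_of_ord (m e)); split=> // e; apply/implyP/mC.
have ms_le e : (m e < s.+1)%N by rewrite ltnS -ms (bigD1 e) //= leq_addr.
exists [ffun e => Ordinal (ms_le e)]; apply/and3P; split.
- by rewrite (eq_bigr m) ?ms // => e _; rewrite ffunE.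
- by apply/forallP => e; rewrite ffunE; apply/implyP/mC.
- by apply/forallP => v; rewrite (eq_bigr m) ?ma // => e _; rewrite ffunE.
Qed.

Lemma edge_ideal_pow_upclosed : upclosed (edge_ideal_pow C s).
Proof.
move=> a a' /edge_ideal_powP[m [ms mC ma]] aa'; apply/edge_ideal_powP.
by exists m; split=> // v; apply: leq_trans (ma v) (aa' v).
Qed.

End EdgeIdealPower.

Section InducedMatching.
Variables (n : nat) (C M : {set {set 'I_n}}).
Hypothesis hM : induced_matching C M.

Lemma im_sub e : e \in M -> e \in C.
Proof. by case/and3P: hM => /subsetP MC _ _ /MC. Qed.

Lemma im_disjoint e f : e \in M -> f \in M -> e != f -> [disjoint e & f].
Proof.
case/and3P: hM => _ /forall_inP dis _ eM fM ef.
by move/forall_inP/(_ f fM)/implyP/(_ ef): (dis e eM).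
Qed.

Lemma im_induced e : e \in C -> e \subset \bigcup_(f in M) f -> e \in M.
Proof. by case/and3P: hM => _ _ /forall_inP ind eC /(implyP (ind e eC)). Qed.

Lemma im_unique e f v : e \in M -> f \in M -> v \in e -> v \in f -> e = f.
Proof.
move=> eM fM ve vf; apply/eqP; apply: contraLR isT => ef.
by rewrite (disjointFr (im_disjoint eM fM ef) ve) in vf.
Qed.

Lemma induced_matching_sub (S : {set {set 'I_n}}) :
  set0 \notin C -> S \subset M -> induced_matching C S.
Proof.
move=> C0 SM; apply/and3P; split.
- by apply/subsetP => e /(subsetP SM)/im_sub.
- apply/forall_inP => e eS; apply/forall_inP => f fS; apply/implyP.
  exact: im_disjoint (subsetP SM e eS) (subsetP SM f fS).
apply/forall_inP => e eC; apply/implyP => eS.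
have eM : e \in M.
  apply: im_induced eC (subset_trans eS _).
  by apply/bigcupsP => f fS; apply: bigcup_sup (subsetP SM f fS).
have /set0Pn[v ve] : e != set0 by apply: contraNneq C0 => <-.
have /bigcupP[f fS vf] := subsetP eS v ve.
by rewrite (im_unique eM (subsetP SM f fS) ve vf).
Qed.

End InducedMatching.

Lemma indmatch_witness n (C : {set {set 'I_n}}) t : (0 < t <= indmatch C)%N ->
  exists M, induced_matching C M /\ (t <= #|M|)%N.
Proof.
case/andP=> t0 tI; case: (pickP (induced_matching C)) => [M0 hM0|none]; last first.
  by move: tI; rewrite /indmatch big_pred0 // leqn0 => /eqP t00; rewrite t00 in t0.
have pos : (0 < #|induced_matching C|)%N by apply/card_gt0P; exists M0.
have [M hM eqM] := @eq_bigmax_cond _ (induced_matching C) (fun M => #|M|) pos.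
by exists M; split => //; move: tI; rewrite /indmatch eqM.
Qed.

Definition matching_degree n (M : {set {set 'I_n}}) (c : {set 'I_n} -> nat)
  (v : 'I_n) : nat := (\sum_(e in M) c e * (v \in e))%N.

Lemma total_matching_degree n (M : {set {set 'I_n}}) c :
  total_degree (matching_degree M c) = (\sum_(e in M) c e * #|e|)%N.
Proof.
rewrite /total_degree /matching_degree exchange_big /=; apply: eq_bigr => e _.
by rewrite -big_distrr /= -sum1_card [in RHS]big_mkcond.
Qed.

(* Over an induced matching M of a clutter with nonempty edges, membership
   of x^(b - 1_H) in I(C)^s, for b the matching degree, is decided by
   counting: each edge e of M can be used at most c_e times, one less if H
   meets e. *)
Section MatchingDegree.
Variables (n s : nat) (C M : {set {set 'I_n}}) (c : {set 'I_n} -> nat).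
Hypotheses (hM : induced_matching C M) (C0 : set0 \notin C).
Local Notation b := (matching_degree M c).
Implicit Types (e f H : {set 'I_n}).

Lemma matching_degree_in e v : e \in M -> v \in e -> b v = c e.
Proof.
move=> eM ve; rewrite /matching_degree (bigD1 e) //= ve muln1 big1 ?addn0 //.
move=> f /andP[fM fe]; apply/eqP; rewrite muln_eq0 eqb0; apply/orP; right.
by apply: contra fe => vf; rewrite (im_unique hM fM eM vf ve).
Qed.

Lemma matching_degree_pos v : (0 < b v)%N -> v \in \bigcup_(e in M) e.
Proof.
apply: contraTT => /bigcupP vM; rewrite -leqNgt leqn0 /matching_degree big1 // => e eM.
by apply/eqP; rewrite muln_eq0 eqb0; apply/orP; right; apply/negP => ve; apply: vM; exists e.
Qed.

Lemma edge_pow_matchingE (H : {set 'I_n}) :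
  edge_ideal_pow C s (fun v => b v - (v \in H))%N =
  (s <= \sum_(e in M) (c e - ~~ [disjoint e & H]))%N.
Proof.
set a := fun v => (b v - (v \in H))%N.
have meetH e v : v \in e -> v \in H -> ~~ [disjoint e & H].
  by move=> ve vH; apply/negP => /disjointFr/(_ ve); rewrite vH.
apply/idP/idP => [/edge_ideal_powP[m [ms mC ma]]|hs].
  have m_le e v : v \in e -> (m e <= a v)%N.
    by move=> ve; apply: leq_trans (ma v); rewrite (bigD1 e) //= leq_addr.
  have m_supp e : (0 < m e)%N -> e \in M.
    move=> pos; apply: (im_induced hM (mC e pos)); apply/subsetP => v ve.
    by apply: matching_degree_pos; move: (leq_trans pos (m_le e v ve)); rewrite /a; lia.
  rewrite -ms (bigID (fun e => e \in M)) /= [X in (_ + X)%N]big1 ?addn0 => [|e eM]; last first.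
    by apply/eqP; rewrite -leqn0 leqNgt; apply/negP => /m_supp; apply/negP: eM.
  apply: leq_sum => e eM; case: (boolP [disjoint e & H]) => dj /=.
    have /set0Pn[v ve] : e != set0 by apply: contraNneq C0 => e0; rewrite -e0 (im_sub hM eM).
    by move: (m_le e v ve); rewrite /a (matching_degree_in eM ve) (disjointFr dj ve).
  move: dj; rewrite -setI_eq0 => /set0Pn[v]; rewrite inE => /andP[ve vH].
  by move: (m_le e v ve); rewrite /a (matching_degree_in eM ve) vH.
have [m [mc mM ms]] := sum_trim hs.
apply/edge_ideal_powP; exists m; split.
- by rewrite (bigID (fun e => e \in M)) /= [X in (_ + X)%N]big1 ?addn0 // => e /mM.
- by move=> e; apply: contraTT => eC; rewrite mM ?ltnn //; apply: contra eC; apply: im_sub.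
move=> v; case: (boolP (v \in \bigcup_(e in M) e)) => [/bigcupP[f fM vf]|vM].
  rewrite (bigD1 f) //= big1 ?addn0 => [|e /andP[ve ef]]; last first.
    by apply: mM; apply: contra ef => eM; rewrite (im_unique hM eM fM ve vf).
  apply: leq_trans (mc f) _; rewrite /a (matching_degree_in fM vf).
  by apply: leq_sub2l; case vH: (v \in H); rewrite // (meetH f v vf vH).
rewrite big1 // => e ve; apply: mM; apply: contra vM => eM.
by apply/bigcupP; exists e.
Qed.

Lemma kbasis_matchingE i (H : {set 'I_n}) : (forall e, e \in M -> 0 < c e)%N ->
  kbasis (edge_ideal_pow C s) b i H =
  [&& #|H| == i, H \subset \bigcup_(e in M) e
    & s <= \sum_(e in M) (c e - ~~ [disjoint e & H])]%N.
Proof.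
move=> c_pos; rewrite /kbasis edge_pow_matchingE; congr [&& _, _ & _].
apply/forall_inP/subsetP => [bH v /bH/matching_degree_pos //|HM v /HM/bigcupP[e eM ve]].
by rewrite (matching_degree_in eM ve) c_pos.
Qed.

End MatchingDegree.

(* The counting conditions behind parts (i) and (ii): with weights 1 and s
   (resp. 1, 1 and s) on the edges of the matching, a set meeting edges
   according to the booleans m_j supports s edge monomials iff it does not
   meet all of them. *)
Lemma two_count (s : nat) (m1 m2 : bool) : (1 <= s)%N ->
  (s <= (1 - m1) + (s - m2))%N = ~~ (m1 && m2).
Proof. by move=> s1; case: m1; case: m2 => /=; apply/idP/idP => //; lia. Qed.

Lemma three_count (s : nat) (m1 m2 m3 : bool) : (1 <= s)%N ->
  (s <= (1 - m1) + (1 - m2) + (s - m3))%N = ~~ [&& m1, m2 & m3].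
Proof. by move=> s1; case: m1; case: m2; case: m3 => /=; apply/idP/idP => //; lia. Qed.

(* In multidegree
   b = 1_{e1} + s 1_{e2} (total degree k + k s), a set H inside the edges
   is a Koszul basis element iff it does not meet both edges.  With u in e1
   and w in e2, the boundary of {u, w} is a 1-cycle, detected by the
   cochain meetc e1 counting points in e1. *)
Section TwoEdges.
Local Open Scope ring_scope.
Variables (K : fieldType) (n s : nat) (C : {set {set 'I_n}}).
Variables (e1 e2 : {set 'I_n}) (u w : 'I_n).
Hypotheses (s1 : (1 <= s)%N) (C0 : set0 \notin C) (ne12 : e1 != e2).
Hypothesis hM : induced_matching C [set e1; e2].
Hypotheses (ue1 : u \in e1) (we2 : w \in e2).
Implicit Types (e H : {set 'I_n}).

Let M := [set e1; e2].
Let c e : nat := if e == e2 then s else 1%N.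
Let b := matching_degree M c.
Let I := edge_ideal_pow C s.

Let e1M : e1 \in M. Proof. by rewrite !inE eqxx. Qed.
Let e2M : e2 \in M. Proof. by rewrite !inE eqxx orbT. Qed.
Let dis12 : [disjoint e1 & e2]. Proof. exact: (im_disjoint hM e1M e2M ne12). Qed.

Let bigM (R : Type) (idx : R) (op : Monoid.com_law idx) (g : {set 'I_n} -> R) :
  \big[op/idx]_(e in M) g e = op (g e1) (g e2).
Proof. by rewrite big_setU1 ?big_set1 ?inE. Qed.

Let kbasis_two i H : kbasis I b i H = [&& #|H| == i, H \subset e1 :|: e2
    & ~~ (~~ [disjoint e1 & H] && ~~ [disjoint e2 & H])].
Proof.
rewrite kbasis_matchingE // => [|e]; last by rewrite /c; case: eqP.
by rewrite !bigM /= /c eqxx (negbTE ne12) two_count.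
Qed.

Lemma two_edges_faces v : v \in [set u; w] -> kbasis I b 1 ([set u; w] :\ v).
Proof.
have uw : u != w by apply: contraTneq we2 => <-; rewrite (disjointFr dis12 ue1).
rewrite !inE kbasis_two => /orP[] /eqP ->.
- rewrite setU1K ?inE // cards1 sub1set !inE we2 orbT /=.
  by rewrite (disjoint_sym _ [set w]) disjoints1 (disjointFl dis12 we2).
- rewrite setUC setU1K ?inE 1?eq_sym // cards1 sub1set !inE ue1 /=.
  by rewrite !(disjoint_sym _ [set u]) !disjoints1 (disjointFr dis12 ue1) andbF.
Qed.

Lemma two_edges_cocycle H : kbasis I b 2 H -> cobd (meetc K e1) H = 0.
Proof.
rewrite kbasis_two => /and3P[/eqP cH H12]; rewrite negb_and !negbK.
move=> /orP[dj1|dj2]; apply: cobd_meetc_pair0 => //; first by rewrite disjoint_sym dj1 orbT.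
apply/orP; left; apply/subsetP => x xH; move: (subsetP H12 x xH).
by rewrite inE (disjointFl dj2 xH) orbF.
Qed.

Lemma two_edges_reg k : uniform k C -> reg_ge K I (k * s + k - 1).
Proof.
move=> unif; have k0 : (0 < k)%N.
  by rewrite -(unif e1 (im_sub hM e1M)) card_gt0; apply: contraNneq C0 => <-; apply: (im_sub hM).
exists 1%N, (k * s + k - 1)%N; split => //; exists b; split.
  rewrite total_matching_degree bigM /= /c eqxx (negbTE ne12).
  by rewrite !unif ?(im_sub hM) //; clear -k0; lia.
apply: (betti_neq0_of_cocycle (@edge_ideal_pow_upclosed n s C) _ two_edges_faces) => //.
  exact: two_edges_cocycle.
by rewrite cobd_meetc_cross ?ksign_neq0 // (disjointFl dis12 we2).
Qed.

End TwoEdges.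

(* In
   multidegree b = 1_{e1} + 1_{e2} + s 1_{e3} (total degree 2k + k s), a
   set H (inside the edges) is a Koszul basis element iff it does not meet
   all three edges.  With u_j in e_j, the boundary of {u1, u2, u3} is a
   2-cycle, detected by the cup-product cochain
   G |-> cobd (meetc e1) G * meetc e2 G. *)
Section ThreeEdges.
Local Open Scope ring_scope.
Variables (K : fieldType) (n s : nat) (C : {set {set 'I_n}}).
Variables (e1 e2 e3 : {set 'I_n}) (u1 u2 u3 : 'I_n).
Hypotheses (s1 : (1 <= s)%N) (C0 : set0 \notin C).
Hypotheses (ne12 : e1 != e2) (ne13 : e1 != e3) (ne23 : e2 != e3).
Hypothesis hM : induced_matching C (e3 |: [set e1; e2]).
Hypotheses (ue1 : u1 \in e1) (ue2 : u2 \in e2) (ue3 : u3 \in e3).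

Implicit Types (e G H : {set 'I_n}) (u : 'I_n).

Let M := e3 |: [set e1; e2].
Let c e : nat := if e == e3 then s else 1%N.
Let b := matching_degree M c.
Let I := edge_ideal_pow C s.
Let cup G : K := cobd (meetc K e1) G * meetc K e2 G.
Let F0 := u3 |: [set u1; u2].

Let e1M : e1 \in M. Proof. by rewrite !inE eqxx orbT. Qed.
Let e2M : e2 \in M. Proof. by rewrite !inE eqxx !orbT. Qed.
Let e3M : e3 \in M. Proof. by rewrite !inE eqxx. Qed.
Let dis12 : [disjoint e1 & e2]. Proof. exact: (im_disjoint hM e1M e2M ne12). Qed.
Let dis13 : [disjoint e1 & e3]. Proof. exact: (im_disjoint hM e1M e3M ne13). Qed.
Let dis23 : [disjoint e2 & e3]. Proof. exact: (im_disjoint hM e2M e3M ne23). Qed.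

Let bigM (R : Type) (idx : R) (op : Monoid.com_law idx) (g : {set 'I_n} -> R) :
  \big[op/idx]_(e in M) g e = op (op (g e1) (g e2)) (g e3).
Proof.
rewrite big_setU1 ?big_setU1 ?big_set1 ?inE //= ?negb_or 1?eq_sym ?ne13 1?eq_sym ?ne23 //.
by rewrite Monoid.mulmC.
Qed.

Let kbasis_three i H : kbasis I b i H = [&& #|H| == i, H \subset e1 :|: e2 :|: e3
    & ~~ [&& ~~ [disjoint e1 & H], ~~ [disjoint e2 & H] & ~~ [disjoint e3 & H]]].
Proof.
rewrite kbasis_matchingE // => [|e]; last by rewrite /c; case: eqP.
by rewrite !bigM /= /c eqxx (negbTE ne13) (negbTE ne23) three_count.
Qed.

Let F0P (P : 'I_n -> Prop) : P u1 -> P u2 -> P u3 -> forall x, x \in F0 -> P x.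
Proof. by move=> P1 P2 P3 x; rewrite !inE => /or3P[] /eqP ->. Qed.

Let F0_cover : F0 \subset e1 :|: e2 :|: e3.
Proof. by apply/subsetP; apply: F0P; rewrite !inE ?ue1 ?ue2 ?ue3 ?orbT. Qed.

Let u12 : u1 != u2.
Proof. by apply: contraTneq ue2 => <-; rewrite (disjointFr dis12 ue1). Qed.
Let u13 : u1 != u3.
Proof. by apply: contraTneq ue3 => <-; rewrite (disjointFr dis13 ue1). Qed.
Let u23 : u2 != u3.
Proof. by apply: contraTneq ue3 => <-; rewrite (disjointFr dis23 ue2). Qed.
Let u3_notin : u3 \notin [set u1; u2].
Proof. by rewrite !inE negb_or !(eq_sym u3) u13 u23. Qed.

Let card_F0 : #|F0| = 3%N.
Proof. by rewrite cardsU1 cards2 u12 u3_notin. Qed.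

Let face_disjoint e u : (forall x, x \in F0 -> x \in e -> x = u) ->
  [disjoint e & F0 :\ u].
Proof.
move=> pt; rewrite disjoint_sym disjoint_subset; apply/subsetP => x.
by rewrite in_setD1 => /andP[xu xF]; apply/negP => /(pt x xF) ex; rewrite ex eqxx in xu.
Qed.

Let pt1 x : x \in F0 -> x \in e1 -> x = u1.
Proof. by move: x; apply: (@F0P (fun x => x \in e1 -> x = u1)); rewrite // ?(disjointFl dis12 ue2) ?(disjointFl dis13 ue3). Qed.

Let pt2 x : x \in F0 -> x \in e2 -> x = u2.
Proof. by move: x; apply: (@F0P (fun x => x \in e2 -> x = u2)); rewrite // ?(disjointFr dis12 ue1) ?(disjointFl dis23 ue3). Qed.

Let pt3 x : x \in F0 -> x \in e3 -> x = u3.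
Proof. by move: x; apply: (@F0P (fun x => x \in e3 -> x = u3)); rewrite // ?(disjointFr dis13 ue1) ?(disjointFr dis23 ue2). Qed.

Let cup_vanish G : [disjoint e1 & G] || [disjoint e2 & G] -> cup G = 0.
Proof.
case/orP => dj; rewrite /cup; last by rewrite (meetc0 _ (G := G)) ?mulr0 // disjoint_sym.
rewrite cobd_zero ?mul0r // => v _; apply: meetc0.
by rewrite disjoint_sym; apply: disjointWr dj; apply: subD1set.
Qed.

Lemma three_edges_faces v : v \in F0 -> kbasis I b 2 (F0 :\ v).
Proof.
move=> vF; rewrite kbasis_three (subset_trans (subD1set F0 v) F0_cover).
have -> /= : #|F0 :\ v| == 2%N by move: card_F0; rewrite (cardsD1 v) vF add1n => -[->].
move: v vF; apply: F0P.
- by rewrite (face_disjoint pt1).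
- by rewrite (face_disjoint pt2) andbF.
- by rewrite (face_disjoint pt3) !andbF.
Qed.

Lemma three_edges_cocycle H : kbasis I b 3 H -> cobd cup H = 0.
Proof.
rewrite kbasis_three => /and3P[/eqP cH Hcov hs].
have faceW e v : [disjoint e & H] -> [disjoint e & H :\ v].
  by move=> dj; apply: disjointWr dj; apply: subD1set.
case: (boolP [disjoint e2 & H]) => [dj2|nj2].
  by apply: cobd_zero => v _; apply: cup_vanish; rewrite (faceW e2) ?orbT.
case: (boolP [disjoint e1 & H]) => [dj1|nj1].
  by apply: cobd_zero => v _; apply: cup_vanish; rewrite (faceW e1).
have dj3 : [disjoint e3 & H] by move: hs; rewrite nj1 nj2 /= negbK.
(* H lies in e1 :|: e2, where cup agrees with the coboundary of meetc e1. *)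
rewrite -(cobdK (meetc K e1) H); apply: eq_cobd => v vH; apply: cup_meetc_pair => //.
  by move: cH; rewrite (cardsD1 v) vH add1n => -[].
apply/subsetP => x /setD1P[_ xH]; move: (subsetP Hcov x xH).
by rewrite !inE (disjointFl dj3 xH) orbF.
Qed.

Lemma three_edges_nonzero : cobd cup F0 != 0.
Proof.
have u3F : u3 \in F0 by rewrite !inE eqxx.
rewrite /cobd (bigD1 u3) //= big1 ?addr0 => [|v /andP[vF]]; last first.
  move: v vF; apply: F0P; rewrite ?eqxx // => _; rewrite cup_vanish ?mulr0 //.
    by rewrite (face_disjoint pt1).
  by rewrite (face_disjoint pt2) orbT.
rewrite setU1K //.
rewrite /cup cup_meetc_pair ?cards2 ?u12 //; last first.
  by apply/subsetP => x; rewrite !inE => /orP[] /eqP ->; rewrite ?ue1 ?ue2 ?orbT.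
by rewrite cobd_meetc_cross ?(disjointFl dis12 ue2) // mulf_neq0 ?ksign_neq0.
Qed.

Lemma three_edges_reg k : uniform k C -> reg_ge K I (k * s + 2 * k - 2).
Proof.
move=> unif; have k0 : (0 < k)%N.
  by rewrite -(unif e1 (im_sub hM e1M)) card_gt0; apply: contraNneq C0 => <-; apply: (im_sub hM).
exists 2%N, (k * s + 2 * k - 2)%N; split => //; exists b; split.
  rewrite total_matching_degree bigM /= /c eqxx (negbTE ne13) (negbTE ne23).
  by rewrite !unif ?(im_sub hM) //; clear -k0; lia.
apply: (betti_neq0_of_cocycle (@edge_ideal_pow_upclosed n s C) _ three_edges_faces) => //.
  exact: three_edges_cocycle.
exact: three_edges_nonzero.
Qed.

End ThreeEdges.

Lemma uniform_set0 n k (C : {set {set 'I_n}}) (e1 e2 : {set 'I_n}) :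
  uniform k C -> e1 \in C -> e2 \in C -> e1 != e2 -> set0 \notin C.
Proof.
move=> unif e1C e2C; apply: contraTN => C0.
have k0 : k = 0%N by rewrite -(unif _ C0) cards0.
have e10 : #|e1| = 0%N by rewrite unif // k0.
have e20 : #|e2| = 0%N by rewrite unif // k0.
by rewrite (cards0_eq e10) (cards0_eq e20) eqxx.
Qed.

Lemma reg_ge_indmatch2 (K : fieldType) n k s (C : {set {set 'I_n}}) :
  (1 <= s)%N -> uniform k C -> (2 <= indmatch C)%N ->
  reg_ge K (edge_ideal_pow C s) (k * s + k - 1).
Proof.
move=> s1 unif I2; have [M [hM /card_gt1P[e1 [e2 [e1M e2M ne12]]]]] := indmatch_witness (I2 : (0 < 2 <= _)%N).
have C0 := uniform_set0 unif (im_sub hM e1M) (im_sub hM e2M) ne12.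
have hS : induced_matching C [set e1; e2].
  by apply: (induced_matching_sub hM C0); apply/subsetP => e; rewrite !inE => /orP[] /eqP ->.
have /set0Pn[u ue1] : e1 != set0 by apply: contraNneq C0 => <-; exact: (im_sub hM e1M).
have /set0Pn[w we2] : e2 != set0 by apply: contraNneq C0 => <-; exact: (im_sub hM e2M).
exact: (two_edges_reg K s1 C0 ne12 hS ue1 we2 unif).
Qed.

Lemma reg_ge_indmatch3 (K : fieldType) n k s (C : {set {set 'I_n}}) :
  (1 <= s)%N -> uniform k C -> (3 <= indmatch C)%N ->
  reg_ge K (edge_ideal_pow C s) (k * s + 2 * k - 2).
Proof.
move=> s1 unif I3; have [M [hM /card_gt2P[e1 [e2 [e3 [[e1M e2M e3M] [ne12 ne23 ne31]]]]]]] :=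
  indmatch_witness (I3 : (0 < 3 <= _)%N).
have C0 := uniform_set0 unif (im_sub hM e1M) (im_sub hM e2M) ne12.
have hS : induced_matching C (e3 |: [set e1; e2]).
  by apply: (induced_matching_sub hM C0); apply/subsetP => e; rewrite !inE => /or3P[] /eqP ->.
have /set0Pn[u1 ue1] : e1 != set0 by apply: contraNneq C0 => <-; exact: (im_sub hM e1M).
have /set0Pn[u2 ue2] : e2 != set0 by apply: contraNneq C0 => <-; exact: (im_sub hM e2M).
have /set0Pn[u3 ue3] : e3 != set0 by apply: contraNneq C0 => <-; exact: (im_sub hM e3M).
by apply: (three_edges_reg K s1 C0 ne12 _ ne23 hS ue1 ue2 ue3 unif); rewrite eq_sym.
Qed.

Theorem corollary3p4 (K : fieldType) (n k s : nat) (C : {set {set 'I_n}}) :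
  clutter C -> uniform k C -> (2 <= s)%N ->
  (indmatch C = 2%N -> reg_ge K (edge_ideal_pow C s) (k * s + k - 1)) /\
  ((3 <= indmatch C)%N -> reg_ge K (edge_ideal_pow C s) (k * s + 2 * k - 2)).
Proof.
move=> _ unif s2; have s1 : (1 <= s)%N := ltnW s2.
split => [I2|]; last exact: reg_ge_indmatch3.
by apply: reg_ge_indmatch2; rewrite ?I2.
Qed.
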